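(* Let $n\ge 2$, $m_1,\dots,m_n>0$, $f:\mathbb{R}_{>0}\to\mathbb{R}_{>0}$ positive with $\sqrt{x}f(x)$ decreasing, and let $q_k(t)=p(t+h_k)$, $k=1,\dots,n$, be a choreographic solution of $$\ddot q_k=\sum_{j=1,\,j\neq k}^{n} m_j (q_j-q_k)\, f\!\left(\|q_j-q_k\|^2\right),\qquad k\in\{1,\dots,n\},$$ with $\sum_{k=1}^n m_kq_k=0$, for which the curve $p$ has an axis of symmetry. Then for all $l,k\in\{1,\dots,n\}$, $l\neq k$, and all $t$, writing $F(v)=v\,f(\|v\|^2)$: (i) $(m_k-m_l)F\big(p(t+h_l-h_k)-p(t)\big)=\sum_{j\neq k,l} m_j\Big(F\big(p(t+h_j-h_k)-p(t)\big)-F\big(p(t-(h_j-h_l))-p(t)\big)\Big)$; (ii) $(m_k-m_l)F\big(p(t+(h_l-h_k))-p(t)\big)=\sum_{j\neq k,l} m_j\Big(F\big(p(t+(h_j-h_k))-p(t+(h_l-h_k))\big)-F\big(p(t+(h_l-h_j))-p(t+(h_l-h_k))\big)\Big)$; (iii) $(m_k-m_l)\big(p(t+h_l-h_k)-p(t)\big)=\sum_{j\neq k,l} m_j\Big(\big(p(t+h_j-h_k)-p(t)\big)-\big(p(t-(h_j-h_l))-p(t)\big)\Big)$; (iv) $(m_k-m_l)\big(p(t+(h_l-h_k))-p(t)\big)=\sum_{j\neq k,l} m_j\Big(\big(p(t+(h_j-h_k))-p(t+(h_l-h_k))\big)-\big(p(t+(h_l-h_j))-p(t+(h_l-h_k))\big)\Big)$,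 where all sums run over $j\in\{1,\dots,n\}\setminus\{k,l\}$.
   Context: A choreographic solution is one for which there exist a twice continuously differentiable periodic function $p$ and constants $h_1,\dots,h_n$ with $q_k(t)=p(t+h_k)$. The axis of symmetry hypothesis is understood, as in the paper, as: $p$ takes values in $\mathbb{R}^2$ and $p(-t)=\begin{pmatrix}1&0\\0&-1\end{pmatrix}p(t)$ for all $t\in\mathbb{R}$. *)

From Stdlib Require Import Reals List.
From Coquelicot Require Import Coquelicot.
Open Scope R_scope.

Definition V2 := (R * R)%type.
Definition vadd (u v : V2) : V2 := (fst u + fst v, snd u + snd v).
Definition vsub (u v : V2) : V2 := (fst u - fst v, snd u - snd v).
Definition vscale (a : R) (v : V2) : V2 := (a * fst v, a * snd v).
Definition vzero : V2 := (0, 0).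
Definition nsq (v : V2) : R := fst v ^ 2 + snd v ^ 2.

(* sum over indices j = 0, ..., n-1  (bodies are indexed 0..n-1) *)
Definition vsum (n : nat) (g : nat -> V2) : V2 :=
  fold_right vadd vzero (map g (List.seq 0 n)).

Definition vsum_excl (n k l : nat) (g : nat -> V2) : V2 :=
  vsum n (fun j => if orb (Nat.eqb j k) (Nat.eqb j l) then vzero else g j).

Definition vsum_excl1 (n k : nat) (g : nat -> V2) : V2 :=
  vsum n (fun j => if Nat.eqb j k then vzero else g j).

Definition C2 (g : R -> R) : Prop :=
  exists g' g'' : R -> R, forall t,
    is_derive g t (g' t) /\ is_derive g' t (g'' t) /\ continuous g'' t.

Definition D2 (c : R -> V2) (t : R) : V2 :=
  (Derive_n (fun s => fst (c s)) 2 t, Derive_n (fun s => snd (c s)) 2 t).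

Definition Ff (f : R -> R) (v : V2) : V2 := vscale (f (nsq v)) v.

Definition qk (p : R -> V2) (h : nat -> R) (k : nat) (t : R) : V2 := p (t + h k).

Definition choreographic_solution (n : nat) (m : nat -> R) (f : R -> R)
    (p : R -> V2) (h : nat -> R) : Prop :=
  C2 (fun s => fst (p s)) /\ C2 (fun s => snd (p s)) /\
  (exists T, 0 < T /\ forall t, p (t + T) = p t) /\
  (* collision-free (f is only defined on (0,oo)) *)
  (forall j k t, (j < n)%nat -> (k < n)%nat -> j <> k ->
     qk p h j t <> qk p h k t) /\
  (forall k t, (k < n)%nat ->
     D2 (qk p h k) t =
     vsum_excl1 n k (fun j =>
       vscale (m j) (Ff f (vsub (qk p h j t) (qk p h k t))))).

Definition axis_symmetric (p : R -> V2) : Prop :=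
  forall t, p (- t) = (fst (p t), - snd (p t)).

(** Shifting the equation of motion of body [k] by [-h k] turns it into an
    equation for the curve itself, [p'' s = sum_(j<>k) m_j F(p(s + h_j - h_k) - p s)],
    one for each [k].  Composing with the reflection [t |-> -t] and using the axis
    of symmetry gives a second family, [p'' s = sum_(j<>l) m_j F(p(s - (h_j - h_l)) - p s)].
    Equating the [k]-th equation of the first family with the [l]-th of the second
    and separating the terms [j = l] and [j = k], which both involve
    [p(s + h_l - h_k) - p s], yields (i); (ii) is (i) for the pair [(l, k)] at time
    [t + h_l - h_k], using that [F] is odd.  The same bookkeeping with [F] replaced
    by the identity gives (iii) and (iv): there both families equal
    [-(sum_j m_j) p s] because the centre of mass is at the origin. *)

From Stdlib Require Import Reals List Lra Lia.
From Coquelicot Require Import Coquelicot.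
Open Scope R_scope.

Ltac vec_ring :=
  apply injective_projections; unfold vadd, vsub, vscale, vzero; simpl; ring.

Definition vrefl (v : V2) : V2 := (fst v, - snd v).

Lemma vrefl_involutive (v : V2) : vrefl (vrefl v) = v.
Proof. unfold vrefl; apply injective_projections; simpl; ring. Qed.

Lemma vscale_vrefl (c : R) (v : V2) : vscale c (vrefl v) = vrefl (vscale c v).
Proof. unfold vrefl; vec_ring. Qed.

Lemma Ff_vsub_vrefl (f : R -> R) (a b : V2) :
  Ff f (vsub (vrefl a) (vrefl b)) = vrefl (Ff f (vsub a b)).
Proof.
  unfold Ff.
  replace (nsq (vsub (vrefl a) (vrefl b))) with (nsq (vsub a b))
    by (unfold nsq, vsub, vrefl; simpl; ring).
  unfold vrefl; vec_ring.
Qed.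

Lemma Ff_vsub_sym (f : R -> R) (a b : V2) :
  Ff f (vsub b a) = vscale (-1) (Ff f (vsub a b)).
Proof.
  unfold Ff.
  replace (nsq (vsub b a)) with (nsq (vsub a b)) by (unfold nsq, vsub; simpl; ring).
  vec_ring.
Qed.

Lemma vsum_S (n : nat) (g : nat -> V2) : vsum (S n) g = vadd (vsum n g) (g n).
Proof.
  unfold vsum; rewrite seq_S, map_app, fold_right_app; simpl.
  generalize (map g (List.seq 0 n)); intros l.
  induction l as [|a l IH]; simpl; [vec_ring|].
  rewrite IH; vec_ring.
Qed.

Lemma vsum_ext_lt (n : nat) (g1 g2 : nat -> V2) :
  (forall j, (j < n)%nat -> g1 j = g2 j) -> vsum n g1 = vsum n g2.
Proof.
  induction n as [|n IH]; intros Hg; [reflexivity|].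
  rewrite !vsum_S, IH, Hg by auto; reflexivity.
Qed.

Lemma vsum_ext (n : nat) (g1 g2 : nat -> V2) :
  (forall j, g1 j = g2 j) -> vsum n g1 = vsum n g2.
Proof. intros Hg; apply vsum_ext_lt; auto. Qed.

Lemma vsum_vsub (n : nat) (a b : nat -> V2) :
  vsum n (fun j => vsub (a j) (b j)) = vsub (vsum n a) (vsum n b).
Proof.
  induction n as [|n IH]; [unfold vsum; simpl; vec_ring|].
  rewrite !vsum_S, IH; vec_ring.
Qed.

Lemma vsum_vrefl (n : nat) (g : nat -> V2) :
  vsum n (fun j => vrefl (g j)) = vrefl (vsum n g).
Proof.
  induction n as [|n IH]; [unfold vsum, vrefl; simpl; vec_ring|].
  rewrite !vsum_S, IH; unfold vrefl; vec_ring.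
Qed.

Lemma vsum_excl1_vsum (n k : nat) (g : nat -> V2) :
  g k = vzero -> vsum_excl1 n k g = vsum n g.
Proof.
  intros Hk; apply vsum_ext; intros j.
  destruct (Nat.eqb_spec j k); [subst; auto | reflexivity].
Qed.

Lemma vsum_excl1_split (n k l : nat) (g : nat -> V2) : (l < n)%nat -> k <> l ->
  vsum_excl1 n k g = vadd (g l) (vsum_excl n k l g).
Proof.
  intros Hl Hkl; unfold vsum_excl1, vsum_excl.
  induction n as [|n IH]; [lia|].
  rewrite !vsum_S.
  destruct (Nat.eq_dec l n) as [<- | Hln].
  - rewrite (vsum_ext_lt l (fun j => if j =? k then vzero else g j)
               (fun j => if orb (j =? k) (j =? l) then vzero else g j)).
    + rewrite (proj2 (Nat.eqb_neq l k)), Nat.eqb_refl by auto; simpl; vec_ring.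
    + intros j Hj; rewrite (proj2 (Nat.eqb_neq j l)) by lia.
      destruct (j =? k); reflexivity.
  - rewrite IH by lia; rewrite (proj2 (Nat.eqb_neq n l)) by auto.
    destruct (n =? k); simpl; vec_ring.
Qed.

Lemma vsum_excl_sym (n k l : nat) (g : nat -> V2) :
  vsum_excl n k l g = vsum_excl n l k g.
Proof. apply vsum_ext; intros j; rewrite Bool.orb_comm; reflexivity. Qed.

Lemma vsum_excl_scale_vsub (n k l : nat) (c : nat -> R) (a b : nat -> V2) :
  vsum_excl n k l (fun j => vscale (c j) (vsub (a j) (b j))) =
  vsub (vsum_excl n k l (fun j => vscale (c j) (a j)))
       (vsum_excl n k l (fun j => vscale (c j) (b j))).
Proof.
  unfold vsum_excl; rewrite <- vsum_vsub; apply vsum_ext; intros j.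
  destruct (orb _ _); vec_ring.
Qed.

Lemma vsum_excl1_scale_vsub (n k : nat) (c : nat -> R) (x : nat -> V2) (y : V2) :
  x k = y ->
  vsum_excl1 n k (fun j => vscale (c j) (vsub (x j) y)) =
  vsub (vsum n (fun j => vscale (c j) (x j))) (vsum n (fun j => vscale (c j) y)).
Proof.
  intros Hk; rewrite vsum_excl1_vsum, <- vsum_vsub.
  - apply vsum_ext; intros j; vec_ring.
  - rewrite Hk; vec_ring.
Qed.

Section Balance.

Variables (n : nat) (m : nat -> R) (p : R -> V2) (h : nat -> R) (Phi : V2 -> V2).

Hypothesis balance : forall k l s, (k < n)%nat -> (l < n)%nat ->
  vsum_excl1 n k (fun j => vscale (m j) (Phi (vsub (p (s + h j - h k)) (p s)))) =
  vsum_excl1 n l (fun j => vscale (m j) (Phi (vsub (p (s - (h j - h l))) (p s)))).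

Lemma balance_identity (l k : nat) (t : R) :
  (l < n)%nat -> (k < n)%nat -> l <> k ->
  vscale (m k - m l) (Phi (vsub (p (t + h l - h k)) (p t))) =
    vsum_excl n k l (fun j => vscale (m j)
      (vsub (Phi (vsub (p (t + h j - h k)) (p t)))
            (Phi (vsub (p (t - (h j - h l))) (p t))))).
Proof.
  intros Hl Hk Hlk.
  pose proof (balance k l t Hk Hl) as H.
  rewrite (vsum_excl1_split n k l), (vsum_excl1_split n l k), (vsum_excl_sym n l k)
    in H by auto.
  replace (t - (h k - h l)) with (t + h l - h k) in H by ring.
  rewrite vsum_excl_scale_vsub.
  apply (f_equal fst) in H as H1; apply (f_equal snd) in H as H2.
  unfold vadd, vsub, vscale in *; simpl in *.
  apply injective_projections; simpl; lra.
Qed.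

Hypothesis Phi_vsub_sym : forall a b, Phi (vsub b a) = vscale (-1) (Phi (vsub a b)).

Lemma balance_identity_shifted (l k : nat) (t : R) :
  (l < n)%nat -> (k < n)%nat -> l <> k ->
  vscale (m k - m l) (Phi (vsub (p (t + (h l - h k))) (p t))) =
    vsum_excl n k l (fun j => vscale (m j)
      (vsub (Phi (vsub (p (t + (h j - h k))) (p (t + (h l - h k)))))
            (Phi (vsub (p (t + (h l - h j))) (p (t + (h l - h k))))))).
Proof.
  intros Hl Hk Hlk.
  set (u := t + (h l - h k)).
  pose proof (balance_identity k l u Hk Hl (not_eq_sym Hlk)) as H.
  replace (u + h k - h l) with t in H by (unfold u; ring).
  transitivity (vscale (m l - m k) (Phi (vsub (p t) (p u)))).
  { rewrite Phi_vsub_sym; vec_ring. }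
  rewrite H, vsum_excl_sym; apply vsum_ext; intros j.
  replace (u + h j - h l) with (t + (h j - h k)) by (unfold u; ring).
  replace (u - (h j - h k)) with (t + (h l - h j)) by (unfold u; ring).
  reflexivity.
Qed.

End Balance.

Lemma C2_ex_derive_n (g : R -> R) : C2 g -> forall k x, (k <= 2)%nat -> ex_derive_n g k x.
Proof.
  intros [g' [g'' Hg]] k x Hk.
  destruct k as [|[|[|k]]]; try lia; simpl.
  - exact I.
  - exists (g' x); apply Hg.
  - apply ex_derive_ext with g'.
    + intros y; symmetry; apply is_derive_unique, Hg.
    + exists (g'' x); apply Hg.
Qed.

Lemma Derive_2_comp_opp (g : R -> R) (x : R) :
  C2 g -> Derive_n (fun y => g (- y)) 2 x = Derive_n g 2 (- x).
Proof.
  intros Hg; rewrite Derive_n_comp_opp; [simpl; ring|].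
  apply filter_forall; intros y k Hk; apply C2_ex_derive_n; auto.
Qed.

Lemma D2_axis_symmetric (p : R -> V2) (s : R) :
  C2 (fun s => fst (p s)) -> C2 (fun s => snd (p s)) -> axis_symmetric p ->
  D2 p (- s) = vrefl (D2 p s).
Proof.
  intros Hx Hy Hsym; unfold D2, vrefl; cbn [fst snd]; f_equal.
  - rewrite <- Derive_2_comp_opp by exact Hx.
    apply Derive_n_ext; intros y; rewrite Hsym; reflexivity.
  - rewrite <- Derive_2_comp_opp, <- Derive_n_opp by exact Hy.
    apply Derive_n_ext; intros y; rewrite Hsym; reflexivity.
Qed.

Section Choreography.

Variables (n : nat) (m : nat -> R) (f : R -> R) (p : R -> V2) (h : nat -> R).

Hypothesis motion : forall k t, (k < n)%nat ->
  D2 (qk p h k) t =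
  vsum_excl1 n k (fun j => vscale (m j) (Ff f (vsub (qk p h j t) (qk p h k t)))).

Lemma motion_forward (k : nat) (s : R) : (k < n)%nat ->
  D2 p s = vsum_excl1 n k (fun j => vscale (m j) (Ff f (vsub (p (s + h j - h k)) (p s)))).
Proof.
  intros Hk; pose proof (motion k (s - h k) Hk) as H.
  unfold D2, qk in H.
  rewrite (Derive_n_comp_trans (fun z => fst (p z))),
    (Derive_n_comp_trans (fun z => snd (p z))) in H.
  replace (s - h k + h k) with s in H by ring.
  unfold D2; rewrite H; apply vsum_ext; intros j.
  replace (s - h k + h j) with (s + h j - h k) by ring; reflexivity.
Qed.

Hypotheses (px_C2 : C2 (fun s => fst (p s))) (py_C2 : C2 (fun s => snd (p s)))
  (p_sym : axis_symmetric p).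

Lemma motion_backward (l : nat) (s : R) : (l < n)%nat ->
  D2 p s = vsum_excl1 n l (fun j => vscale (m j) (Ff f (vsub (p (s - (h j - h l))) (p s)))).
Proof.
  intros Hl.
  rewrite <- (vrefl_involutive (D2 p s)), <- D2_axis_symmetric by auto.
  rewrite (motion_forward l (- s) Hl); unfold vsum_excl1; rewrite <- vsum_vrefl.
  apply vsum_ext; intros j; destruct (j =? l); [unfold vrefl; vec_ring|].
  replace (- s + h j - h l) with (- (s - (h j - h l))) by ring.
  rewrite !p_sym; fold (vrefl (p s)) (vrefl (p (s - (h j - h l)))).
  rewrite Ff_vsub_vrefl, vscale_vrefl, vrefl_involutive; reflexivity.
Qed.

Lemma force_balance (k l : nat) (s : R) : (k < n)%nat -> (l < n)%nat ->
  vsum_excl1 n k (fun j => vscale (m j) (Ff f (vsub (p (s + h j - h k)) (p s)))) =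
  vsum_excl1 n l (fun j => vscale (m j) (Ff f (vsub (p (s - (h j - h l))) (p s)))).
Proof. intros Hk Hl; rewrite <- motion_forward, <- motion_backward by auto; reflexivity. Qed.

Hypothesis centre_of_mass : forall t, vsum n (fun k => vscale (m k) (qk p h k t)) = vzero.

Lemma centre_of_mass_forward (k : nat) (s : R) :
  vsum n (fun j => vscale (m j) (p (s + h j - h k))) = vzero.
Proof.
  rewrite <- (centre_of_mass (s - h k)); apply vsum_ext; intros j; unfold qk.
  replace (s - h k + h j) with (s + h j - h k) by ring; reflexivity.
Qed.

Lemma centre_of_mass_backward (l : nat) (s : R) :
  vsum n (fun j => vscale (m j) (p (s - (h j - h l)))) = vzero.
Proof.
  rewrite <- (vrefl_involutive (vsum n _)), <- vsum_vrefl.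
  rewrite (vsum_ext n _ (fun j => vscale (m j) (qk p h j (- s - h l)))).
  - rewrite centre_of_mass; unfold vrefl; vec_ring.
  - intros j; unfold qk.
    replace (- s - h l + h j) with (- (s - (h j - h l))) by ring.
    rewrite p_sym; fold (vrefl (p (s - (h j - h l)))).
    rewrite vscale_vrefl; reflexivity.
Qed.

Lemma displacement_balance (k l : nat) (s : R) :
  vsum_excl1 n k (fun j => vscale (m j) (vsub (p (s + h j - h k)) (p s))) =
  vsum_excl1 n l (fun j => vscale (m j) (vsub (p (s - (h j - h l))) (p s))).
Proof.
  rewrite !vsum_excl1_scale_vsub, centre_of_mass_forward, centre_of_mass_backward;
    [reflexivity | f_equal; ring ..].
Qed.

End Choreography.

Theorem lemma2 (n : nat) (m : nat -> R) (f : R -> R) (p : R -> V2) (h : nat -> R) :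
  (2 <= n)%nat ->
  (forall k, (k < n)%nat -> 0 < m k) ->
  (forall x, 0 < x -> 0 < f x) ->
  (forall x y, 0 < x -> x < y -> sqrt y * f y < sqrt x * f x) ->
  choreographic_solution n m f p h ->
  (forall t, vsum n (fun k => vscale (m k) (qk p h k t)) = vzero) ->
  axis_symmetric p ->
  forall l k t, (l < n)%nat -> (k < n)%nat -> l <> k ->
  (* (i) *)
  vscale (m k - m l) (Ff f (vsub (p (t + h l - h k)) (p t))) =
    vsum_excl n k l (fun j => vscale (m j)
      (vsub (Ff f (vsub (p (t + h j - h k)) (p t)))
            (Ff f (vsub (p (t - (h j - h l))) (p t))))) /\
  (* (ii) *)
  vscale (m k - m l) (Ff f (vsub (p (t + (h l - h k))) (p t))) =
    vsum_excl n k l (fun j => vscale (m j)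
      (vsub (Ff f (vsub (p (t + (h j - h k))) (p (t + (h l - h k)))))
            (Ff f (vsub (p (t + (h l - h j))) (p (t + (h l - h k))))))) /\
  (* (iii) *)
  vscale (m k - m l) (vsub (p (t + h l - h k)) (p t)) =
    vsum_excl n k l (fun j => vscale (m j)
      (vsub (vsub (p (t + h j - h k)) (p t))
            (vsub (p (t - (h j - h l))) (p t)))) /\
  (* (iv) *)
  vscale (m k - m l) (vsub (p (t + (h l - h k))) (p t)) =
    vsum_excl n k l (fun j => vscale (m j)
      (vsub (vsub (p (t + (h j - h k))) (p (t + (h l - h k))))
            (vsub (p (t + (h l - h j))) (p (t + (h l - h k)))))).
Proof.
  intros _ _ _ _ [px_C2 [py_C2 [_ [_ motion]]]] com p_sym l k t Hl Hk Hlk.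
  pose proof (force_balance n m f p h motion px_C2 py_C2 p_sym) as force_balance.
  pose proof (displacement_balance n m p h p_sym com) as disp_balance.
  assert (id_vsub_sym : forall a b, vsub b a = vscale (-1) (vsub a b))
    by (intros; vec_ring).
  repeat split.
  - exact (balance_identity n m p h (Ff f) force_balance l k t Hl Hk Hlk).
  - exact (balance_identity_shifted n m p h (Ff f) force_balance (Ff_vsub_sym f)
             l k t Hl Hk Hlk).
  - exact (balance_identity n m p h (fun v => v) (fun k l s _ _ => disp_balance k l s)
             l k t Hl Hk Hlk).
  - exact (balance_identity_shifted n m p h (fun v => v)
             (fun k l s _ _ => disp_balance k l s) id_vsub_sym l k t Hl Hk Hlk).
Qed.
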